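(* Let $n\ge 2$ be an integer and $A\subseteq L_n$. Then: (a) $(X_n,\tau(A))$ is perfect if and only if $A$ is a $G_\delta$-set in $(L_n,\tau_E|_{L_n})$; (b) $(X_n,\tau(A))$ is Lindelöf if and only if $L_n\setminus A$ does not contain a closed uncountable subset of $(L_n,\tau_E|_{L_n})$; (c) $(X_n,\tau(A))$ is $\sigma$-compact if and only if $A$ is an $F_\sigma$-set in $(L_n,\tau_E|_{L_n})$ and $|L_n\setminus A|\le\aleph_0$.
   Context: For $\overline{x},\overline{a}\in\mathbb R^n$ let $|\overline{x}-\overline{a}|$ be the Euclidean distance and $B(\overline{a},\epsilon)=\{\overline{x}\in\mathbb R^n:|\overline{x}-\overline{a}|<\epsilon\}$. Let $P_n=\{\overline{x}\in\mathbb R^n: x_n>0\}$, $L_n=\{\overline{x}\in\mathbb R^n: x_n=0\}$, $X_n=P_n\cup L_n$, and let $\tau_E$ denote the Euclidean topology on $X_n$ (so $(L_n,\tau_E|_{L_n})\cong\mathbb R^{n-1}$). For $\overline{a}\in L_n$ and $\epsilon>0$ put $\overline{a(\epsilon)}=(a_1,\dots,a_{n-1},\epsilon)$ and $\tilde B(\overline{a},\epsilon)=\{\overline{a}\}\cup B(\overline{a(\epsilon)},\epsilon)$. For $A\subseteq L_n$, the topology $\tau(A)$ on $X_n$ is generated by the local bases: at $\overline{a}\in P_n$, the sets $B(\overline{a},\epsilon)$ with $0<\epsilon<a_n$; at $\overline{a}\in A$, the sets $B(\overline{a},\epsilon)\cap X_n$ with $\epsilon>0$; at $\overline{a}\in L_n\setminus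 A$, the sets $\tilde B(\overline{a},\epsilon)$ with $\epsilon>0$. A space is perfect if every closed set is a $G_\delta$-set. *)

From HB Require Import structures.
From mathcomp Require Import all_boot all_order all_algebra.
From mathcomp Require Import all_classical all_reals.
Set Implicit Arguments. Unset Strict Implicit. Unset Printing Implicit Defensive.
Import Order.TTheory GRing.Theory Num.Theory.
Local Open Scope classical_set_scope.
Local Open Scope ring_scope.

(* Points of R^n are functions 'I_n -> R; coordinate x_n is index n-1. *)
Definition edist (R : realType) (n : nat) (x y : 'I_n -> R) : R :=
  Num.sqrt (\sum_(i < n) (x i - y i) ^+ 2).

Definition eball (R : realType) (n : nat) (a : 'I_n -> R) (e : R) : set ('I_n -> R) :=
  [set x | edist x a < e].

(* last coordinate x_n (0 if n = 0, irrelevant since n >= 2) *)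
Definition lastc (R : realType) (n : nat) (x : 'I_n -> R) : R :=
  if @insub nat (fun k => (k < n)%N) 'I_n n.-1 is Some i then x i else 0.

Definition Pn (R : realType) (n : nat) : set ('I_n -> R) := [set x | 0 < lastc x].
Arguments Pn : clear implicits.
Definition Ln (R : realType) (n : nat) : set ('I_n -> R) := [set x | lastc x = 0].
Arguments Ln : clear implicits.
Definition Xn (R : realType) (n : nat) : set ('I_n -> R) := Pn R n `|` Ln R n.
Arguments Xn : clear implicits.

Definition lift_pt (R : realType) (n : nat) (a : 'I_n -> R) (e : R) : 'I_n -> R :=
  fun i => if (i : nat) == n.-1 then e else a i.

Definition tball (R : realType) (n : nat) (a : 'I_n -> R) (e : R) : set ('I_n -> R) :=
  [set a] `|` eball (lift_pt a e) e.

Definition tauA_open (R : realType) (n : nat) (A : set ('I_n -> R))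
    (U : set ('I_n -> R)) : Prop :=
  U `<=` Xn R n /\
  forall a, U a ->
    (Pn R n a -> exists e : R, 0 < e /\ e < lastc a /\ eball a e `<=` U) /\
    (A a -> exists e : R, 0 < e /\ eball a e `&` Xn R n `<=` U) /\
    (Ln R n a -> ~ A a -> exists e : R, 0 < e /\ tball a e `<=` U).

Definition eopenL (R : realType) (n : nat) (U : set ('I_n -> R)) : Prop :=
  U `<=` Ln R n /\
  forall a, U a -> exists e : R, 0 < e /\ eball a e `&` Ln R n `<=` U.

Definition t_closed (T : Type) (X : set T) (op : set T -> Prop) (F : set T) : Prop :=
  F `<=` X /\ op (X `\` F).

Definition t_Gdelta (T : Type) (op : set T -> Prop) (G : set T) : Prop :=
  exists U : nat -> set T, (forall i, op (U i)) /\ G = \bigcap_i U i.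

Definition t_Fsigma (T : Type) (X : set T) (op : set T -> Prop) (F : set T) : Prop :=
  exists C : nat -> set T, (forall i, t_closed X op (C i)) /\ F = \bigcup_i C i.

Definition t_perfect (T : Type) (X : set T) (op : set T -> Prop) : Prop :=
  forall F, t_closed X op F -> t_Gdelta op F.

Definition t_compact (T : Type) (op : set T -> Prop) (K : set T) : Prop :=
  forall (I : Type) (U : I -> set T), (forall i, op (U i)) ->
    K `<=` \bigcup_i U i ->
    exists J : set I, finite_set J /\ K `<=` \bigcup_(i in J) U i.

Definition t_lindelof (T : Type) (X : set T) (op : set T -> Prop) : Prop :=
  forall (I : Type) (U : I -> set T), (forall i, op (U i)) ->
    X `<=` \bigcup_i U i ->
    exists J : set I, countable J /\ X `<=` \bigcup_(i in J) U i.

Definition t_sigma_compact (T : Type) (X : set T) (op : set T -> Prop) : Prop :=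
  exists K : nat -> set T, (forall i, K i `<=` X /\ t_compact op (K i)) /\
    X = \bigcup_i K i.

(* In tau(A) the points of P_n and of A keep their Euclidean neighbourhoods, while a
   point b of L_n \ A only has the neighbourhoods {b} u B(b(e), e), which meet L_n in
   {b}. Hence every subset of L_n that misses a Euclidean neighbourhood of A in L_n is
   tau(A)-closed: A itself is closed, and a Euclidean-closed F in L_n \ A is closed and
   discrete.
   (a) If A = /\ U_i with U_i open, the Euclidean interiors of the U_i in L_n still
   contain A. Conversely, if A = /\ O_j, a closed F is the intersection of the open
   sets X_n \ (K_j u E_j), where K_j is the set of points whose 1/(j+1)-ball misses F
   and E_j = (L_n \ O_j) \ F.
   (b) A closed discrete subset of a Lindelof space is countable. Conversely, the
   rational balls lying inside a member of an open cover cover X_n except for a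
   Euclidean-closed subset of L_n \ A.
   (c) If K is compact and a in K lies in an open set T, then K lies in T near a.
   Taking T = P_n u {a}, or T empty when a is not in K, shows that K n A is closed in
   L_n and that the points of K n (L_n \ A) are isolated in K. Conversely, if
   A = \/ C_i, then X_n is the union of the Euclidean-compact subsets C_i n [-m,m]^n
   and {x_n >= 1/(m+1)} n [-m,m]^n of P_n u A, which are compact for tau(A), and of
   the countably many points of L_n \ A. *)

From Pilot Require Import Defs.
From HB Require Import structures.
From mathcomp Require Import all_boot all_order all_algebra.
From mathcomp Require Import all_classical all_reals all_analysis.
From mathcomp Require Import ring lra.
Import Order.TTheory GRing.Theory Num.Theory numFieldNormedType.Exports.
Set Implicit Arguments. Unset Strict Implicit. Unset Printing Implicit Defensive.
Local Open Scope classical_set_scope.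
Local Open Scope ring_scope.
(* mathcomp-analysis also has an [edist] (extended distance of a pseudometric). *)
Local Notation edist := Defs.edist.

Section EuclideanDistance.
Variables (R : realType) (n : nat).
Implicit Types x y z : 'I_n -> R.

Lemma sum_sqr_ge0 (u : 'I_n -> R) : 0 <= \sum_j u j ^+ 2.
Proof. by apply: sumr_ge0 => j _; exact: sqr_ge0. Qed.

Lemma sum_sqr_eq0 (u : 'I_n -> R) : \sum_j u j ^+ 2 = 0 -> forall j, u j = 0.
Proof.
move=> /(psumr_eq0P (fun j _ => sqr_ge0 (u j))) u0 j.
by apply/eqP; rewrite -sqrf_eq0 u0.
Qed.

Lemma edist_ge0 x y : 0 <= edist x y.
Proof. exact: sqrtr_ge0. Qed.

Lemma edist_sym x y : edist x y = edist y x.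
Proof. by congr Num.sqrt; apply: eq_bigr => i _; rewrite -sqrrN opprB. Qed.

Lemma edistxx x : edist x x = 0.
Proof. by rewrite /edist big1 ?sqrtr0 // => i _; rewrite subrr expr0n. Qed.

Lemma edist_eq0 x y : edist x y = 0 -> x = y.
Proof.
move/eqP; rewrite sqrtr_eq0 le_eqVlt ltNge sum_sqr_ge0 orbF => /eqP /sum_sqr_eq0 xy0.
by apply/funext => j; apply/eqP; rewrite -subr_eq0 xy0.
Qed.

Lemma coord_le_edist x y j : `|x j - y j| <= edist x y.
Proof.
rewrite -sqrtr_sqr ler_sqrt ?sum_sqr_ge0 // (bigD1 j) //= lerDl.
by apply: sumr_ge0 => i _; exact: sqr_ge0.
Qed.

Lemma edist_le_sum x y : edist x y <= \sum_j `|x j - y j|.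
Proof.
have S0 : 0 <= \sum_j `|x j - y j| by apply: sumr_ge0.
rewrite -[leRHS]ger0_norm // -sqrtr_sqr ler_sqrt ?sqr_ge0 // expr2 mulr_suml.
apply: ler_sum => j _; rewrite -real_normK ?num_real // expr2 ler_wpM2l //.
by rewrite (bigD1 j) //= lerDl; apply: sumr_ge0.
Qed.

Lemma cauchy_schwarz (u w : 'I_n -> R) :
  \sum_j u j * w j <= Num.sqrt (\sum_j u j ^+ 2) * Num.sqrt (\sum_j w j ^+ 2).
Proof.
set U := Num.sqrt _; set W := Num.sqrt _.
have U2 : U ^+ 2 = \sum_j u j ^+ 2 by rewrite sqr_sqrtr ?sum_sqr_ge0.
have W2 : W ^+ 2 = \sum_j w j ^+ 2 by rewrite sqr_sqrtr ?sum_sqr_ge0.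
have UW_ge0 : 0 <= U * W by rewrite mulr_ge0 ?sqrtr_ge0.
have [UW0|UW_neq0] := eqVneq (U * W) 0.
  have /orP[/eqP U0|/eqP W0] : (U == 0) || (W == 0) by rewrite -mulf_eq0 UW0.
  - have u0 : forall j, u j = 0 by apply: sum_sqr_eq0; rewrite -U2 U0 expr0n.
    by rewrite big1 // => j _; rewrite u0 mul0r.
  - have w0 : forall j, w j = 0 by apply: sum_sqr_eq0; rewrite -W2 W0 expr0n.
    by rewrite big1 // => j _; rewrite w0 mulr0.
have UW_gt0 : 0 < U * W by rewrite lt0r UW_neq0.
suff : 2 * (U * W) * \sum_j u j * w j <= 2 * (U * W) * (U * W).
  by rewrite ler_pM2l // mulr_gt0 // ltr0n.
rewrite mulr_sumr; apply: (@le_trans _ _ (\sum_j (W ^+ 2 * u j ^+ 2 + U ^+ 2 * w j ^+ 2))).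
  apply: ler_sum => j _; have := sqr_ge0 (W * u j - U * w j); nra.
rewrite big_split /= -!mulr_sumr -U2 -W2; nra.
Qed.

Lemma edist_triangle x y z : edist x z <= edist x y + edist y z.
Proof.
have CS := cauchy_schwarz (fun j => x j - y j) (fun j => y j - z j).
rewrite /edist -[leRHS]ger0_norm ?addr_ge0 ?sqrtr_ge0 // -sqrtr_sqr ler_sqrt ?sqr_ge0 //.
set U := Num.sqrt _ in CS *; set W := Num.sqrt _ in CS *.
have U2 : U ^+ 2 = \sum_j (x j - y j) ^+ 2 by rewrite sqr_sqrtr ?sum_sqr_ge0.
have W2 : W ^+ 2 = \sum_j (y j - z j) ^+ 2 by rewrite sqr_sqrtr ?sum_sqr_ge0.
have -> : \sum_j (x j - z j) ^+ 2 = U ^+ 2 + 2 * \sum_j (x j - y j) * (y j - z j) + W ^+ 2.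
  by rewrite U2 W2 mulr_sumr -!big_split /=; apply: eq_bigr => j _; ring.
nra.
Qed.

End EuclideanDistance.

Lemma exists_natSinv_lt (R : realType) (e : R) : 0 < e -> exists k : nat, k.+1%:R^-1 < e.
Proof.
move=> e_gt0; exists (Num.Def.archi_bound e^-1).
rewrite invf_plt ?posrE // (lt_trans (archi_boundP _)) ?ltr_nat ?invr_ge0 ?ltW //.
Qed.

Section HalfSpace.
Variables (R : realType) (n : nat).
Hypothesis n_gt0 : (0 < n)%N.
Implicit Types (x y a p : 'I_n -> R) (e : R).

Local Notation P := (Pn R n).
Local Notation L := (Ln R n).
Local Notation X := (Xn R n).

Definition lasti : 'I_n := Ordinal (etrans (ltn_predL n) n_gt0).

Lemma lastcE x : lastc x = x lasti.
Proof.
rewrite /lastc; case: insubP => [i _ ei|/negP []]; last by rewrite ltn_predL.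
by congr x; apply: val_inj; rewrite ei.
Qed.

Lemma lift_pt_last a e : lift_pt a e lasti = e.
Proof. by rewrite /lift_pt eqxx. Qed.

Lemma lift_pt_ne a e j : j != lasti -> lift_pt a e j = a j.
Proof.
move=> jN; rewrite /lift_pt ifF //.
by apply: contraNF jN => /eqP j_last; apply/eqP/val_inj.
Qed.

Lemma lastc_lift_pt a e : lastc (lift_pt a e) = e.
Proof. by rewrite lastcE lift_pt_last. Qed.

Lemma Pn_notLn x : P x -> ~ L x.
Proof. by rewrite /Pn /Ln /= => + x0; rewrite x0 ltxx. Qed.

Lemma edist_lift_pt a e : L a -> 0 <= e -> edist (lift_pt a e) a = e.
Proof.
move=> La e_ge0; rewrite /edist (bigD1 lasti) //= big1 => [|j jN].
  by rewrite addr0 lift_pt_last -lastcE La subr0 sqrtr_sqr ger0_norm.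
by rewrite lift_pt_ne // subrr expr0n.
Qed.

Lemma edist_lift_pt2 a e1 e2 : edist (lift_pt a e1) (lift_pt a e2) = `|e1 - e2|.
Proof.
rewrite /edist (bigD1 lasti) //= big1 => [|j jN].
  by rewrite addr0 !lift_pt_last sqrtr_sqr.
by rewrite !lift_pt_ne // subrr expr0n.
Qed.

Lemma lastc_bounds x y : lastc y - edist x y <= lastc x <= lastc y + edist x y.
Proof.
have := coord_le_edist x y lasti; rewrite -!lastcE ler_norml => /andP[h1 h2].
by apply/andP; split; lra.
Qed.

Lemma eball_Pn p e : e <= lastc p -> eball p e `<=` P.
Proof.
move=> e_le y; rewrite /eball /Pn /= => yp.
have /andP[+ _] := lastc_bounds y p; lra.
Qed.

Lemma eball_lift_pt_Pn a e : eball (lift_pt a e) e `<=` P.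
Proof. by apply: eball_Pn; rewrite lastc_lift_pt. Qed.

Lemma tball_Xn a e : L a -> tball a e `<=` X.
Proof. by move=> La y [->|/eball_lift_pt_Pn Py]; [right|left]. Qed.

Lemma tball_sub_eball a e : L a -> 0 < e -> tball a e `<=` eball a (e + e).
Proof.
move=> La e_gt0 y; rewrite /eball /= => -[->|ya]; first by rewrite edistxx addr_gt0.
apply: le_lt_trans (edist_triangle _ (lift_pt a e) _) _.
by rewrite edist_lift_pt ?ltW // ltrD2r.
Qed.

Lemma le_tball a e1 e2 : 0 <= e1 -> e1 <= e2 -> tball a e1 `<=` tball a e2.
Proof.
move=> e1_ge0 e12 y; rewrite /tball /eball /= => -[->|y1]; [by left|right].
apply: le_lt_trans (edist_triangle _ (lift_pt a e1) _) _.
rewrite edist_lift_pt2 ler0_norm ?subr_le0 //; lra.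
Qed.

End HalfSpace.

Section TauTopology.
Variables (R : realType) (n : nat).
Hypothesis n_gt0 : (0 < n)%N.
Variable A : set ('I_n -> R).
Hypothesis A_Ln : A `<=` Ln R n.
Implicit Types (x y a b : 'I_n -> R) (e : R) (U V S O : set ('I_n -> R)).

Local Notation P := (Pn R n).
Local Notation L := (Ln R n).
Local Notation X := (Xn R n).
Local Notation tau_open := (tauA_open A).
Local Notation tau_closed := (t_closed X tau_open).

Definition eopenX U := U `<=` X /\
  forall x, U x -> exists e, 0 < e /\ forall y, X y -> edist y x < e -> U y.

Lemma Pn_eball x : P x -> exists e, 0 < e /\ e < lastc x /\ eball x e `<=` P.
Proof.
move=> Px; have x_gt0 : 0 < lastc x := Px.
exists (lastc x / 2); split; first by rewrite divr_gt0.
split; first by rewrite ltr_pdivrMr // ltr_pMr // ltr1n.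
by apply: (eball_Pn n_gt0); rewrite ler_pdivrMr // ler_pMr // ler1n.
Qed.

Lemma eopenX_tau U : eopenX U -> tau_open U.
Proof.
move=> [UX Uo]; split => // x Ux; have [e [e_gt0 xU]] := Uo x Ux.
split; [|split].
- move=> Px; have [d [d_gt0 [d_lt dP]]] := Pn_eball Px.
  exists (Num.min e d); split; first by rewrite lt_min e_gt0.
  split; first by rewrite gt_min d_lt orbT.
  move=> y; rewrite /eball /= lt_min => /andP[ye yd].
  by apply: xU ye; left; apply: dP.
- by move=> _; exists e; split => // y [ye Xy]; exact: xU.
- move=> Lx _; have e2_gt0 : 0 < e / 2 by rewrite divr_gt0.
  exists (e / 2); split => // y yt; apply: xU; first exact: (tball_Xn n_gt0 Lx yt).
  by have := tball_sub_eball n_gt0 Lx e2_gt0 yt; rewrite -splitr.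
Qed.

Lemma tau_open0 : tau_open set0.
Proof. by split. Qed.

Lemma tau_openI U V : tau_open U -> tau_open V -> tau_open (U `&` V).
Proof.
move=> [UX Uo] [_ Vo]; split=> [x [/UX //]|x [Ux Vx]].
have [UP [UA UL]] := Uo x Ux; have [VP [VA VL]] := Vo x Vx.
split; [|split].
- move=> Px; have [e1 [e1_gt0 [e1_lt e1U]]] := UP Px.
  have [e2 [e2_gt0 [_ e2V]]] := VP Px.
  exists (Num.min e1 e2); split; first by rewrite lt_min e1_gt0.
  split; first by rewrite gt_min e1_lt.
  move=> y; rewrite /eball /= lt_min => /andP[y1 y2].
  by split; [exact: (e1U _ y1) | exact: (e2V _ y2)].
- move=> Ax; have [e1 [e1_gt0 e1U]] := UA Ax; have [e2 [e2_gt0 e2V]] := VA Ax.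
  exists (Num.min e1 e2); split; first by rewrite lt_min e1_gt0.
  move=> y []; rewrite /eball /= lt_min => /andP[y1 y2] Xy.
  by split; [exact: e1U | exact: e2V].
- move=> Lx nAx; have [e1 [e1_gt0 e1U]] := UL Lx nAx.
  have [e2 [e2_gt0 e2V]] := VL Lx nAx.
  have m_ge0 : 0 <= Num.min e1 e2 by rewrite le_min !ltW.
  exists (Num.min e1 e2); split; first by rewrite lt_min e1_gt0.
  move=> y ym; split; [apply: e1U | apply: e2V]; apply: (le_tball n_gt0 m_ge0 _ ym).
    by rewrite ge_min lexx.
  by rewrite ge_min lexx orbT.
Qed.

Lemma tau_open_eball U x : tau_open U -> U x -> P x \/ A x ->
  exists e, 0 < e /\ forall y, X y -> edist y x < e -> U y.
Proof.
move=> [_ Uo] Ux; have [UP [UA _]] := Uo x Ux; case=> [Px|Ax].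
- by have [e [e_gt0 [_ eU]]] := UP Px; exists e; split => // y _; exact: eU.
- by have [e [e_gt0 eU]] := UA Ax; exists e; split => // y Xy ye; exact: eU.
Qed.

Lemma tau_open_PnU1 b : L b -> ~ A b -> tau_open (P `|` [set b]).
Proof.
move=> Lb nAb; split=> [x [Px|->]|x Ux]; [by left|by right|split; [|split]].
- move=> Px; have [e [e_gt0 [e_lt eP]]] := Pn_eball Px.
  by exists e; split => //; split => // y /eP; left.
- move=> Ax; case: Ux => [Px|xb]; first by case: (Pn_notLn Px (A_Ln Ax)).
  by case: nAb; rewrite -xb.
- move=> Lx _; exists 1; split => // y; case: Ux => [/Pn_notLn//|->].
  by case=> [->|/(eball_lift_pt_Pn n_gt0) Py]; [right|left].
Qed.

Lemma tau_closed_Ln S : S `<=` L ->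
  (forall a, A a -> ~ S a -> exists e, 0 < e /\ forall y, L y -> edist y a < e -> ~ S y) ->
  tau_closed S.
Proof.
move=> SL Sc; split=> [x /SL|]; first by right.
split=> [x []//|x [Xx nSx]]; split; [|split].
- move=> Px; have [e [e_gt0 [e_lt eP]]] := Pn_eball Px.
  exists e; split => //; split => // y /eP Py; split; first by left.
  by move=> /SL; exact: Pn_notLn.
- move=> Ax; have [e [e_gt0 eS]] := Sc x Ax nSx; exists e; split => //.
  by move=> y [ye Xy]; split => // /[dup] /SL Ly; exact: eS.
- move=> Lx _; exists 1; split => // y [->|/(eball_lift_pt_Pn n_gt0) Py]; first by split.
  by split; [left|move=> /SL; exact: Pn_notLn].
Qed.

Lemma tau_closed_A : tau_closed A.
Proof. by apply: tau_closed_Ln. Qed.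

Lemma tau_closed_sub_LnD O S : eopenL O -> A `<=` O -> S `<=` L `\` O -> tau_closed S.
Proof.
move=> [_ Oo] AO SLO; apply: tau_closed_Ln => [x /SLO[]//|a Aa _].
have [e [e_gt0 eO]] := Oo a (AO a Aa); exists e; split => // y Ly ye /SLO[_].
by apply; apply: eO.
Qed.

Lemma tau_closedU S V : tau_closed S -> tau_closed V -> tau_closed (S `|` V).
Proof.
move=> [SX So] [VX Vo]; split=> [x [/SX|/VX]//|].
by rewrite setDUr; apply: tau_openI.
Qed.

End TauTopology.

Section Perfect.
Variables (R : realType) (n : nat).
Hypothesis n_gt0 : (0 < n)%N.
Variable A : set ('I_n -> R).
Hypothesis A_Ln : A `<=` Ln R n.
Implicit Types (x y a : 'I_n -> R) (r : R) (U G : set ('I_n -> R)).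

Local Notation P := (Pn R n).
Local Notation L := (Ln R n).
Local Notation X := (Xn R n).
Local Notation tau_open := (tauA_open A).
Local Notation tau_closed := (t_closed X tau_open).

Definition Linterior U :=
  [set a | L a /\ exists e, 0 < e /\ forall y, L y -> edist y a < e -> U y].

Lemma eopenL_Linterior U : eopenL (Linterior U).
Proof.
split=> [a []//|a [La [e [e_gt0 eU]]]].
exists e; split => // y []; rewrite /eball /= => ya Ly; split => //.
exists (e - edist y a); split; first by rewrite subr_gt0.
by move=> z Lz zy; apply: eU Lz _; have := edist_triangle z y a; lra.
Qed.

Lemma Linterior_sub U : Linterior U `<=` U.
Proof. by move=> a [La [e [e_gt0 eU]]]; apply: eU La _; rewrite edistxx. Qed.

Lemma tau_open_Linterior U : tau_open U -> A `<=` U -> A `<=` Linterior U.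
Proof.
move=> Uo AU a Aa; split; first exact: A_Ln.
have [e [e_gt0 eU]] := tau_open_eball Uo (AU a Aa) (or_intror Aa).
by exists e; split => // y Ly; apply: eU; right.
Qed.

Lemma perfect_Gdelta : t_perfect X tau_open -> t_Gdelta (@eopenL R n) A.
Proof.
move=> perfectX; have [U [Uo AU]] := perfectX A (tau_closed_A n_gt0 A_Ln).
exists (Linterior \o U); split=> [i|]; first exact: eopenL_Linterior.
apply/seteqP; split=> [a Aa i _|a Ua].
  by apply: (tau_open_Linterior (Uo i)) Aa; rewrite AU => x /(_ i I).
by rewrite AU => i _; apply: Linterior_sub (Ua i I).
Qed.

Definition inner_parallel G r :=
  [set x | X x /\ forall y, X y -> edist y x < r -> G y].

Lemma tau_closed_inner_parallel G r : tau_closed (inner_parallel G r).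
Proof.
split=> [x []//|]; apply: (eopenX_tau n_gt0); split=> [x []//|x [Xx nGx]].
have /existsNP[y /not_implyP[Xy /not_implyP[yx nGy]]] :
    ~ forall y, X y -> edist y x < r -> G y by move=> xG; apply: nGx.
exists (r - edist y x); split; first by rewrite subr_gt0.
move=> z Xz zx; split => // -[_ zG]; apply: nGy; apply: zG Xy _.
by have := edist_triangle y x z; rewrite (edist_sym x z); lra.
Qed.

Lemma tau_open_inner_parallel G x : tau_open G -> G x -> P x \/ A x ->
  exists k : nat, inner_parallel G k.+1%:R^-1 x.
Proof.
move=> Go Gx PAx; have [e [e_gt0 eG]] := tau_open_eball Go Gx PAx.
have [k k_lt] := exists_natSinv_lt e_gt0; exists k.
split=> [|y Xy yx]; first by case: PAx => [|/A_Ln]; [left|right].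
exact: eG Xy (lt_trans yx k_lt).
Qed.

Lemma Gdelta_perfect : t_Gdelta (@eopenL R n) A -> t_perfect X tau_open.
Proof.
move=> [V [Vo AV]] F [FX Go]; set G := X `\` F.
have AV_ j : A `<=` V j by rewrite AV => x /(_ j I).
pose K j := inner_parallel G j.+1%:R^-1; pose E j := G `&` (L `\` V j).
have Kc j : tau_closed (K j) by exact: tau_closed_inner_parallel.
have Ec j : tau_closed (E j) by apply: (tau_closed_sub_LnD n_gt0 (Vo j) (AV_ j)) => x [].
exists (fun j => X `\` (K j `|` E j)); split.
  by move=> j; have [_] := tau_closedU n_gt0 (Kc j) (Ec j).
apply/seteqP; split=> [x Fx j _|x xF].
  split=> [|[[Xx xG]|[[_ nFx] _]]]; [exact: FX | |exact: nFx].
  have [_] : G x by apply: xG Xx _; rewrite edistxx invr_gt0 ltr0n.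
  by apply.
have [Xx _] := xF 0%N I; apply: contrapT => nFx.
have Gx : G x by [].
have [PAx|[Lx nAx]] : (P x \/ A x) \/ (L x /\ ~ A x).
  by case: Xx => [|Lx]; [left; left|have [] := pselect (A x); [left; right|right]].
- have [k xk] := tau_open_inner_parallel Go Gx PAx.
  by have [_] := xF k I; apply; left.
- have [j nVj] : exists j, ~ V j x.
    by apply/existsNP => Vx; apply: nAx; rewrite AV => j _; exact: Vx.
  by have [_] := xF j I; apply; right.
Qed.

End Perfect.

Lemma countable_setU T (B C : set T) : countable B -> countable C -> countable (B `|` C).
Proof. by move=> cB cC; rewrite -bigcup2E; apply: bigcup_countable => // -[|[|i]]. Qed.

Section GridBalls.
Variables (R : realType) (n : nat).

Definition grid_index := ({ffun 'I_n -> int} * nat)%type.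

(* Centres on the lattice (1/((k+1)(n+1))) Z^n: every point is within l^1-distance
   n/((k+1)(n+1)) < 1/(k+1) of one of them. *)
Definition grid_center (q : grid_index) : 'I_n -> R :=
  fun j => (q.1 j)%:~R / (q.2.+1 * n.+1)%N%:R.

Definition grid_radius (q : grid_index) : R := q.2.+1%:R^-1.

Definition grid_ball (q : grid_index) := eball (grid_center q) (grid_radius q).

Lemma dist_floor_div (t m : R) : 0 < m -> `|t - (Num.floor (t * m))%:~R / m| <= m^-1.
Proof.
move=> m_gt0; set fl : R := (Num.floor (t * m))%:~R.
have fl_le : fl <= t * m by exact: floor_le.
have lt_fl : t * m < fl + 1 by have := floorD1_gt (t * m); rewrite intrD.
have -> : t - fl / m = (t * m - fl) / m by rewrite mulrBl mulfK ?gt_eqF.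
rewrite normrM normfV (gtr0_norm m_gt0) -[leRHS]mul1r ler_wpM2r ?invr_ge0 ?ltW //.
by rewrite ger0_norm; lra.
Qed.

Lemma grid_ball_base (x : 'I_n -> R) (e : R) : 0 < e ->
  exists q : grid_index, grid_ball q x /\ grid_ball q `<=` eball x e.
Proof.
move=> e_gt0; have [k k_lt] : exists k : nat, k.+1%:R^-1 < e / 2.
  by apply: exists_natSinv_lt; rewrite divr_gt0.
set m : R := (k.+1 * n.+1)%N%:R.
have m_gt0 : 0 < m by rewrite ltr0n muln_gt0.
pose q : grid_index := ([ffun j => Num.floor (x j * m)], k).
have xq : edist x (grid_center q) < k.+1%:R^-1.
  apply: le_lt_trans (edist_le_sum _ _) _.
  apply: (@le_lt_trans _ _ (\sum_(j < n) m^-1)).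
    by apply: ler_sum => j _; rewrite /grid_center /= ffunE; exact: dist_floor_div.
  rewrite sumr_const card_ord -[_ *+ n]mulr_natl ltr_pdivrMr // /m natrM mulrA.
  by rewrite mulVf ?pnatr_eq0 // mul1r ltr_nat.
exists q; split => // y yq; have {}yq : edist y (grid_center q) < k.+1%:R^-1 := yq.
apply: le_lt_trans (edist_triangle y (grid_center q) x) _.
by rewrite (edist_sym _ x) [ltRHS]splitr; apply: ltrD; exact: lt_trans k_lt.
Qed.

End GridBalls.

Section Lindelof.
Variables (R : realType) (n : nat).
Hypothesis n_gt0 : (0 < n)%N.
Variable A : set ('I_n -> R).
Hypothesis A_Ln : A `<=` Ln R n.
Implicit Types (x y a b : 'I_n -> R) (F S : set ('I_n -> R)).

Local Notation P := (Pn R n).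
Local Notation L := (Ln R n).
Local Notation X := (Xn R n).
Local Notation tau_open := (tauA_open A).
Local Notation tau_closed := (t_closed X tau_open).
Local Notation closedL := (t_closed L (@eopenL R n)).

Lemma Ln0 : L (fun _ => 0).
Proof. by rewrite /Ln /= /lastc; case: insub. Qed.

Lemma tau_closed_subset_LnDA F S : F `<=` L `\` A -> closedL F -> S `<=` F -> tau_closed S.
Proof.
move=> FLA [FL Fo] SF; apply: (tau_closed_sub_LnD n_gt0 Fo).
- by move=> a Aa; split; [exact: A_Ln | move=> /FLA[]].
- by move=> x /SF Fx; split; [exact: FL | case].
Qed.

Lemma lindelof_countable_closed F : t_lindelof X tau_open ->
  F `<=` L `\` A -> closedL F -> countable F.
Proof.
move=> lindX FLA Fc.
(* Every subset of F is closed, so b is the only point of F in X \ (F \ {b}). *)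
have FX : F `<=` X by move=> x /FLA[Lx _]; right.
have Uo b : tau_open (X `\` (F `\ b)).
  by have [] := tau_closed_subset_LnDA FLA Fc (@subDsetl _ F [set b]).
have XU : X `<=` \bigcup_b (X `\` (F `\ b)).
  by move=> x Xx; exists x => //; split=> // -[_]; apply.
have [J [Jc XJ]] := lindX _ _ Uo XU.
apply: sub_countable Jc; apply: subset_card_le => x Fx.
have [b Jb [_ nFb]] := XJ x (FX x Fx).
by have -> : x = b by apply: contrapT => xb; exact: nFb.
Qed.

Lemma countable_subcover_off_closed (I : Type) (U : I -> set ('I_n -> R)) :
  (forall i, tau_open (U i)) -> X `<=` \bigcup_i U i ->
  exists2 J : set I, countable J &
    exists F, [/\ F `<=` L `\` A, closedL F & X `\` F `<=` \bigcup_(i in J) U i].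
Proof.
move=> Uo XU; have [i0 _ _] := XU _ (or_intror Ln0).
pose good q := exists i, grid_ball q `&` X `<=` U i.
have [g gP] : {g : grid_index n -> I & forall q, good q -> grid_ball q `&` X `<=` U (g q)}.
  apply: (@choice _ _ (fun q i => good q -> grid_ball q `&` X `<=` U i)) => q.
  have [[i qi]|nq] := pselect (good q); first by exists i.
  by exists i0 => /nq.
pose F := [set x | X x /\ ~ exists2 q, good q & grid_ball q x].
have FLA : F `<=` L `\` A.
  move=> x [Xx nq]; suff nPA : ~ (P x \/ A x).
    by case: Xx => [Px|Lx]; [case: nPA; left|split => // Ax; apply: nPA; right].
  move=> PAx; have [i _ Uix] := XU x Xx.
  have [e [e_gt0 eU]] := tau_open_eball (Uo i) Uix PAx.
  have [q [qx qe]] := grid_ball_base x e_gt0.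
  by apply: nq; exists q => //; exists i => y [/qe ye Xy]; exact: eU.
exists (range g); first exact: (sub_countable (card_image_le _ _) (countableP _)).
exists F; split => //.
- split=> [x /FLA[]//|]; split=> [x []//|a [La nFa]].
  have [q qgood qa] : exists2 q, good q & grid_ball q a.
    by apply: contrapT => nq; apply: nFa; split; [right|].
  exists (grid_radius R q - edist a (grid_center R q)); split; first by rewrite subr_gt0.
  move=> y []; rewrite /eball /= => ya Ly; split => // -[_]; apply; exists q => //.
  by rewrite /grid_ball /eball /=; have := edist_triangle y a (grid_center R q); lra.
- move=> x [Xx nFx]; have [q qgood qx] : exists2 q, good q & grid_ball q x.
    by apply: contrapT => nq; apply: nFx.
  by exists (g q); [exists q | exact: gP].
Qed.

Lemma lindelof_of_countable_closed :
  (forall F, F `<=` L `\` A -> closedL F -> countable F) -> t_lindelof X tau_open.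
Proof.
move=> Fcount I U Uo XU.
have [J Jc [F [FLA Fc XFJ]]] := countable_subcover_off_closed Uo XU.
have [i0 _ _] := XU _ (or_intror Ln0).
have [h hP] : {h : ('I_n -> R) -> I & forall x, X x -> U (h x) x}.
  apply: (@choice _ _ (fun x i => X x -> U i x)) => x.
  have [Xx|nXx] := pselect (X x); last by exists i0 => /nXx.
  by have [i _ Uix] := XU x Xx; exists i.
exists (J `|` h @` F); split.
  by apply: countable_setU Jc _; exact: sub_countable (card_image_le _ _) (Fcount F FLA Fc).
move=> x Xx; have [Fx|nFx] := pselect (F x).
  by exists (h x); [right; exists x | exact: hP].
by have [i Ji Uix] := XFJ x (conj Xx nFx); exists i; [left|].
Qed.

End Lindelof.

Section AbstractCompactness.
Variables (T : Type) (op : set T -> Prop).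
Implicit Types K : set T.

Lemma t_compact_subsingleton K : (forall x y, K x -> K y -> x = y) -> t_compact op K.
Proof.
move=> K1 I U Uo KU; have [[x Kx]|K0] := pselect (exists x, K x); last first.
  by exists set0; split=> // y Ky; case: K0; exists y.
have [i _ Uix] := KU x Kx; exists [set i]; split=> [|y Ky]; first exact: finite_set1.
by exists i => //; rewrite (K1 y x Ky Kx).
Qed.

Lemma t_compactU K1 K2 : t_compact op K1 -> t_compact op K2 -> t_compact op (K1 `|` K2).
Proof.
move=> K1c K2c I U Uo KU.
have [J1 [J1fin K1J]] := K1c I U Uo (fun x K1x => KU x (or_introl K1x)).
have [J2 [J2fin K2J]] := K2c I U Uo (fun x K2x => KU x (or_intror K2x)).
exists (J1 `|` J2); split=> [|x [/K1J|/K2J] [i Ji Uix]]; first by rewrite finite_setU.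
- by exists i => //; left.
- by exists i => //; right.
Qed.

Lemma t_sigma_compact_countable (X : set T) (I : countType) (K : I -> set T) :
  (forall i, K i `<=` X /\ t_compact op (K i)) -> X = \bigcup_i K i -> t_sigma_compact X op.
Proof.
move=> Kc XK; exists (fun j => if unpickle j is Some i then K i else set0); split.
  move=> j; case: unpickle => [i|]; first exact: Kc.
  by split=> //; apply: t_compact_subsingleton.
rewrite XK; apply/seteqP; split=> [x [i _ Kix]|x [j _]].
  by exists (pickle i) => //; rewrite pickleK.
by case: unpickle => [i Kix|//]; exists i.
Qed.

End AbstractCompactness.

Lemma finite_nat_ub (J : set nat) : finite_set J -> exists N, forall k, J k -> (k <= N)%N.
Proof.
move=> /finite_fsetP[D ->]; exists (\max_(k <- finmap.enum_fset D) k)%N => k Dk.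
exact: leq_bigmax_seq.
Qed.

Section EuclideanClosed.
Variables (R : realType) (n : nat).
Hypothesis n_gt0 : (0 < n)%N.
Implicit Types (x y : 'I_n -> R) (S : set ('I_n -> R)).

Definition eclosed S :=
  forall x, ~ S x -> exists e, 0 < e /\ forall y, edist y x < e -> ~ S y.

Lemma eclosedI S1 S2 : eclosed S1 -> eclosed S2 -> eclosed (S1 `&` S2).
Proof.
move=> S1c S2c x nSx; have [S1x|nS1x] := pselect (S1 x); last first.
  by have [e [e_gt0 eS]] := S1c x nS1x; exists e; split => // y ye [/(eS y ye)].
have [S2x|nS2x] := pselect (S2 x); first by case: nSx.
by have [e [e_gt0 eS]] := S2c x nS2x; exists e; split => // y ye [_ /(eS y ye)].
Qed.

Definition cube (m : R) := [set x : 'I_n -> R | forall j, `|x j| <= m].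

Lemma le_cube (m1 m2 : R) : m1 <= m2 -> cube m1 `<=` cube m2.
Proof. by move=> m12 x xm j; exact: le_trans (xm j) m12. Qed.

Lemma exists_cube_nat x : exists m : nat, cube m%:R x.
Proof.
exists (Num.Def.archi_bound (edist x (fun=> 0))) => j.
apply: le_trans (ltW (archi_boundP (edist_ge0 _ _))).
by have := coord_le_edist x (fun=> 0) j; rewrite subr0.
Qed.

Lemma eclosed_cube (m : R) : eclosed (cube m).
Proof.
move=> x /existsNP[j /negP]; rewrite -ltNge => m_lt.
exists (`|x j| - m); split=> [|y yx y_box]; first by rewrite subr_gt0.
have := y_box j; have := coord_le_edist x y j; rewrite edist_sym.
have := ler_normD (y j) (x j - y j); rewrite addrC subrK; lra.
Qed.

Lemma eclosed_lastc_ge (d : R) : eclosed [set x | d <= lastc x].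
Proof.
move=> x /negP; rewrite -ltNge => x_lt; exists (d - lastc x).
split=> [|y yx /= y_ge]; first by rewrite subr_gt0.
by have /andP[_] := lastc_bounds n_gt0 y x; lra.
Qed.

Lemma eclosed_closedL S : t_closed (Ln R n) (@eopenL R n) S -> eclosed S.
Proof.
move=> [SL [_ So]] x nSx; have [Lx|nLx] := pselect (Ln R n x).
  have [e [e_gt0 eS]] := So x (conj Lx nSx); exists e; split => // y ye Sy.
  by have [_] := eS y (conj ye (SL y Sy)).
have x_gt0 : 0 < `|lastc x| by rewrite normr_gt0; apply/eqP.
exists `|lastc x|; split => // y yx /SL Ly.
by have := coord_le_edist y x (lasti n_gt0); rewrite -!lastcE Ly sub0r normrN; lra.
Qed.

Lemma edist_ball_rV (v w : 'rV[R]_n) (d : R) :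
  ball v d w -> edist (w ord0) (v ord0) < n.+1%:R * d.
Proof.
move=> [d_gt0 vw]; apply: le_lt_trans (edist_le_sum _ _) _.
apply: (@le_lt_trans _ _ (\sum_(j < n) d)).
  by apply: ler_sum => j _; rewrite distrC; exact/ltW/(vw ord0 j).
by rewrite sumr_const card_ord -[_ *+ n]mulr_natl ltr_pM2r // ltr_nat.
Qed.

Lemma row_ord0 x : (\row_j x j) ord0 = x.
Proof. by apply/funext => j; rewrite mxE. Qed.

Lemma compact_rV_eclosed_cube S (m : R) : eclosed S -> S `<=` cube m ->
  compact [set v : 'rV[R]_n | S (v ord0)].
Proof.
move=> Sc Sm; set S' := [set v | _].
have cube_compact : compact [set v : 'rV[R]_n | forall j, `[-m, m]%classic (v ord0 j)].
  exact: (rV_compact (fun _ => @segment_compact R (-m) m)).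
apply: (subclosed_compact _ cube_compact) => [|v S'v j]; last first.
  by rewrite /= in_itv /= -ler_norml; exact: (Sm _ S'v j).
rewrite closedE => v vS; apply: contrapT => nS'v; apply: vS.
have [e [e_gt0 eS]] := Sc _ nS'v.
apply/nbhs_ballP; exists (e / n.+1%:R); first by apply: divr_gt0; rewrite ?ltr0n.
by move=> w /edist_ball_rV; rewrite mulrC divfK ?pnatr_eq0 //; exact: eS.
Qed.

End EuclideanClosed.

Section SigmaCompact.
Variables (R : realType) (n : nat).
Hypothesis n_gt0 : (0 < n)%N.
Variable A : set ('I_n -> R).
Hypothesis A_Ln : A `<=` Ln R n.
Implicit Types (x y a b : 'I_n -> R) (r : R) (S T K : set ('I_n -> R)).

Local Notation P := (Pn R n).
Local Notation L := (Ln R n).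
Local Notation X := (Xn R n).
Local Notation tau_open := (tauA_open A).
Local Notation tau_compact := (t_compact tau_open).
Local Notation closedL := (t_closed L (@eopenL R n)).

Lemma eopenX_far a r : eopenX [set x | X x /\ r < edist x a].
Proof.
split=> [x []//|x [Xx x_far]]; exists (edist x a - r); split; first by rewrite subr_gt0.
move=> y Xy yx; split => //.
by have := edist_triangle x y a; rewrite (edist_sym x y); lra.
Qed.

Lemma tau_compact_eball K T a : K `<=` X -> tau_compact K -> tau_open T -> (K a -> T a) ->
  exists e, 0 < e /\ K `&` eball a e `<=` T.
Proof.
move=> KX Kc To KTa.
(* Cover K by T and by the complements of the closed balls of radii 1/(k+1) about a. *)
pose V k := if k is k'.+1 then [set x | X x /\ k'.+1%:R^-1 < edist x a] else T.
have Vo k : tau_open (V k).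
  by case: k => [|k] //=; apply: (eopenX_tau n_gt0); exact: eopenX_far.
have KV : K `<=` \bigcup_k V k.
  move=> x Kx; have [xa|xa] := pselect (x = a).
    by exists 0%N => //=; rewrite xa; apply: KTa; rewrite -xa.
  have xa_gt0 : 0 < edist x a by rewrite lt0r edist_ge0 andbT; apply/eqP => /edist_eq0.
  have [k k_lt] := exists_natSinv_lt xa_gt0.
  by exists k.+1 => //=; split => //; exact: KX.
have [J [Jfin KJ]] := Kc _ V Vo KV; have [N JN] := finite_nat_ub Jfin.
exists N.+1%:R^-1; split=> [|x [Kx xa]]; first by rewrite invr_gt0 ltr0n.
have [[|k] Jk //= [_ k_lt]] := KJ x Kx; exfalso.
move: (lt_trans k_lt xa); rewrite ltNge lef_pV2 ?posrE ?ltr0n // ler_nat ltnS.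
by rewrite (ltnW (JN _ Jk)).
Qed.

Lemma tau_compact_closedL K : K `<=` X -> tau_compact K -> closedL (K `&` A).
Proof.
move=> KX Kc; split=> [x [_ /A_Ln]//|]; split=> [x []//|a [La nKAa]].
have [Ka|nKa] := pselect (K a).
  have nAa : ~ A a by move=> Aa; apply: nKAa.
  have [e [e_gt0 eT]] :=
    tau_compact_eball KX Kc (tau_open_PnU1 n_gt0 A_Ln La nAa) (fun=> or_intror erefl).
  exists e; split => // y [ye Ly]; split => // -[Ky Ay].
  by case: (eT y (conj Ky ye)) => [/Pn_notLn|ya]; [apply|apply: nAa; rewrite -ya].
have [e [e_gt0 eT]] := tau_compact_eball KX Kc (tau_open0 A) nKa.
by exists e; split => // y [ye Ly]; split => // -[Ky _]; exact: (eT y (conj Ky ye)).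
Qed.

Lemma tau_compact_LnDA_countable K :
  K `<=` X -> tau_compact K -> countable (K `&` (L `\` A)).
Proof.
move=> KX Kc.
have [f fP] : {f : ('I_n -> R) -> grid_index n & forall b, (K `&` (L `\` A)) b ->
    grid_ball (f b) b /\ K `&` grid_ball (f b) `<=` P `|` [set b]}.
  apply: (@choice _ _ (fun b q => (K `&` (L `\` A)) b ->
    grid_ball q b /\ K `&` grid_ball q `<=` P `|` [set b])) => b.
  have [[Kb [Lb nAb]]|nb] := pselect ((K `&` (L `\` A)) b); last first.
    by exists ([ffun=> 0], 0%N) => /nb.
  have [e [e_gt0 eT]] :=
    tau_compact_eball KX Kc (tau_open_PnU1 n_gt0 A_Ln Lb nAb) (fun=> or_intror erefl).
  have [q [qb qe]] := grid_ball_base b e_gt0.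
  by exists q => _; split => // x [Kx /qe xe]; exact: eT.
apply/countable_injP; exists (pickle \o f) => b1 b2 /set_mem b1K /set_mem b2K /=.
move=> /(pcan_inj pickleK) f12; have [_ b1_iso] := fP b1 b1K.
have [b2_in _] := fP b2 b2K; have [Kb2 [Lb2 _]] := b2K; rewrite -f12 in b2_in.
by case: (b1_iso b2 (conj Kb2 b2_in)) => [/Pn_notLn|->].
Qed.

Lemma sigma_compact_Fsigma : t_sigma_compact X tau_open ->
  t_Fsigma L (@eopenL R n) A /\ countable (L `\` A).
Proof.
move=> [K [Kc XK]]; split.
  exists (fun i => K i `&` A); split=> [i|].
    by have [KX Kic] := Kc i; exact: tau_compact_closedL.
  apply/seteqP; split=> [a Aa|a [i _ []]//].
  have [i _ Kia] : (\bigcup_i K i) a by rewrite -XK; right; exact: A_Ln.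
  by exists i.
have -> : L `\` A = \bigcup_i (K i `&` (L `\` A)).
  apply/seteqP; split=> [x [Lx nAx]|x [i _ []]//].
  have [i _ Kix] : (\bigcup_i K i) x by rewrite -XK; right.
  by exists i.
apply: bigcup_countable => // i _; have [KX Kic] := Kc i.
exact: tau_compact_LnDA_countable.
Qed.

(* Compactness is transported from 'rV[R]_n, whose balls are sup-norm balls: hence the
   factor n.+1 between the radii. *)
Lemma tau_compact_eclosed_cube S (m : R) : S `<=` P `|` A -> eclosed S -> S `<=` cube m ->
  tau_compact S.
Proof.
move=> SPA Sc Sm I U Uo SU.
have [[x0 Sx0]|S0] := pselect (exists x, S x); last first.
  by exists set0; split=> // x Sx; case: S0; exists x.
have [i0 _ _] := SU x0 Sx0.
pose S' := [set v : 'rV[R]_n | S (v ord0)].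
have [r rP] : {r : 'rV[R]_n -> R * I & forall v, S' v -> 0 < (r v).1 /\
    forall y, X y -> edist y (v ord0) < n.+1%:R * (r v).1 -> U (r v).2 y}.
  apply: (@choice _ _ (fun v ri => S' v -> 0 < ri.1 /\
    forall y, X y -> edist y (v ord0) < n.+1%:R * ri.1 -> U ri.2 y)) => v.
  have [Sv|nSv] := pselect (S' v); last by exists (1, i0) => /nSv.
  have [i _ Ui] := SU _ Sv; have [e [e_gt0 eU]] := tau_open_eball (Uo i) Ui (SPA _ Sv).
  exists (e / n.+1%:R, i) => _ /=; split; first by rewrite divr_gt0 ?ltr0n.
  by move=> y Xy; rewrite mulrC divfK ?pnatr_eq0 //; exact: eU.
have := compact_rV_eclosed_cube Sc Sm; rewrite compact_cover.
case/(_ _ S' (fun v => ball v (r v).1) (fun v _ => ball_open v _)) => [v Sv|D DS].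
  by exists v => //; apply: ballxx; exact: (rP v Sv).1.
move: (finite_fset D); set D' := (X in finite_set X) => D'fin SD.
exists ((fun v => (r v).2) @` D'); split=> [|x Sx]; first exact: finite_image.
have S'x : S' (\row_j x j) by rewrite /S' /= row_ord0.
have [w Dw /edist_ball_rV] := SD _ S'x.
rewrite row_ord0 => xw; have /set_mem Sw := DS w Dw.
exists (r w).2; first by exists w.
by apply: (rP w Sw).2 xw; case: (SPA x Sx) => [|/A_Ln]; [left|right].
Qed.

Lemma Fsigma_sigma_compact : t_Fsigma L (@eopenL R n) A -> countable (L `\` A) ->
  t_sigma_compact X tau_open.
Proof.
move=> [C [Cc AC]] /countable_injP[h h_inj].
have CA i : C i `<=` A by rewrite AC => x Cx; exists i.
pose K (im : nat * nat) := (C im.1 `&` cube im.2%:R)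
  `|` ([set x | im.2.+1%:R^-1 <= lastc x] `&` cube im.2%:R)
  `|` [set x | (L `\` A) x /\ h x = im.1].
have KX im : K im `<=` X.
  move=> x [[[/CA/A_Ln Lx _]|[x_ge _]]|[[Lx _] _]]; [by right| |by right].
  by left; apply: lt_le_trans x_ge; rewrite invr_gt0 ltr0n.
apply: (t_sigma_compact_countable (K := K)) => [[i m]|]; first split.
- exact: KX.
- apply: t_compactU; first apply: t_compactU.
  + apply: (tau_compact_eclosed_cube (m := m%:R)) => [x [/CA Ax _]||]; last exact: subIsetr.
      by right.
    by apply: eclosedI; [exact: eclosed_closedL (Cc i)|exact: eclosed_cube].
  + apply: (tau_compact_eclosed_cube (m := m%:R)) => [x [x_ge _]||]; last exact: subIsetr.
      by left; apply: lt_le_trans x_ge; rewrite invr_gt0 ltr0n.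
    by apply: eclosedI; [exact: eclosed_lastc_ge|exact: eclosed_cube].
  + apply: t_compact_subsingleton => x y [xLA hx] [yLA hy].
    by apply: h_inj; rewrite ?inE // hx hy.
apply/seteqP; split=> [x Xx|x [im _ /KX]//].
have [m xm] := exists_cube_nat x.
have [Px|nPx] := pselect (P x).
  have [k k_lt] := exists_natSinv_lt Px.
  exists (0%N, maxn m k) => //; left; right; split => /=.
    by apply: le_trans (ltW k_lt); rewrite lef_pV2 ?posrE ?ltr0n // ler_nat ltnS leq_maxr.
  by apply: le_cube xm; rewrite ler_nat leq_maxl.
have Lx : L x by case: Xx.
have [Ax|nAx] := pselect (A x).
  have [i _ Cix] : (\bigcup_i C i) x by rewrite -AC.
  by exists (i, m) => //; left; left.
by exists (h x, 0%N) => //; right.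
Qed.

End SigmaCompact.

Local Close Scope ring_scope.
Unset Implicit Arguments.

Theorem mainTheorem5 (R : realType) (n : nat) (A : set ('I_n -> R)) :
  (2 <= n)%N -> A `<=` Ln R n ->
  (t_perfect (Xn R n) (tauA_open A) <-> t_Gdelta (@eopenL R n) A) /\
  (t_lindelof (Xn R n) (tauA_open A) <->
     ~ exists F : set ('I_n -> R),
         F `<=` Ln R n `\` A /\ t_closed (Ln R n) (@eopenL R n) F /\ ~ countable F) /\
  (t_sigma_compact (Xn R n) (tauA_open A) <->
     t_Fsigma (Ln R n) (@eopenL R n) A /\ countable (Ln R n `\` A)).
Proof.
move=> n_ge2 A_Ln; have n_gt0 : (0 < n)%N by apply: leq_trans n_ge2.
split; [|split].
- split; [exact: (perfect_Gdelta n_gt0 A_Ln) | exact: (Gdelta_perfect n_gt0 A_Ln)].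
- split=> [lindX [F [FLA [Fc nFc]]]|noF].
    exact/nFc/(lindelof_countable_closed n_gt0 A_Ln lindX FLA Fc).
  apply: lindelof_of_countable_closed => F FLA Fc.
  by apply: contrapT => nFc; apply: noF; exists F.
- split=> [|[]]; first exact: (sigma_compact_Fsigma n_gt0 A_Ln).
  exact: (Fsigma_sigma_compact n_gt0 A_Ln).
Qed.
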